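(* Let $\mathbb{D}=\{z\in\mathbb{C}:|z|<1\}$. For all $z_1,z_2\in\mathbb{D}$, \[ b_{\mathbb{D},2}(z_1,z_2)=\frac{|z_1-z_2|}{\sqrt{2+|z_1|^2+|z_2|^2-2|z_1+z_2|}}. \] In particular, for every $t\in(-1,1)$, $\lim_{r\to1,\ r\in(0,1)}b_{\mathbb{D},2}(r,t)=1$.
   Context: For $z_1,z_2\in\mathbb{D}$, $b_{\mathbb{D},2}(z_1,z_2)=\sup_{z\in\partial\mathbb{D}}\frac{|z_1-z_2|}{\sqrt{|z_1-z|^2+|z-z_2|^2}}$. *)

From Stdlib Require Import Reals.
From Coquelicot Require Import Coquelicot.
Open Scope R_scope.

Definition in_unit_disc (z : C) : Prop := Cmod z < 1.

Definition b_D2 (z1 z2 : C) : Rbar :=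
  Lub_Rbar (fun x : R => exists z : C, Cmod z = 1 /\
     x = Cmod (Cminus z1 z2) / sqrt (Cmod (Cminus z1 z) ^ 2 + Cmod (Cminus z z2) ^ 2)).

(* For |u| = 1 one has |z1 - u|^2 + |u - z2|^2 = 2 + |z1|^2 + |z2|^2 - 2 Re(conj(u) (z1 + z2)),
   and Re(conj(u) w) <= |w| with equality for u = w / |w|.  So the supremum defining b_D2 is
   a maximum, attained where the denominator is smallest.  On the real axis the resulting
   quotient is continuous at r = 1, where it equals (1 - t) / sqrt((1 - t)^2) = 1. *)

From Stdlib Require Import Reals Lra.
From Coquelicot Require Import Coquelicot.
Open Scope R_scope.

Lemma Lub_Rbar_max (E : R -> Prop) (m : R) :
  E m -> (forall x, E x -> x <= m) -> Lub_Rbar E = Finite m.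
Proof.
  intros Em Hm. apply is_lub_Rbar_unique. split.
  - exact Hm.
  - intros b Hb. exact (Hb m Em).
Qed.

Lemma Re_conj_mul_le_Cmod (u w : C) : Cmod u = 1 -> Re (Cconj u * w) <= Cmod w.
Proof.
  intros Hu.
  replace (Cmod w) with (Cmod (Cconj u * w))
    by (rewrite Cmod_mult, Cmod_conj, Hu; ring).
  eapply Rle_trans; [apply Rle_abs | apply re_le_Cmod].
Qed.

Lemma Re_conj_mul_attains_Cmod (w : C) :
  exists u : C, Cmod u = 1 /\ Re (Cconj u * w) = Cmod w.
Proof.
  destruct (Ceq_dec w 0) as [-> | Hw].
  - exists 1%C. split; [apply Cmod_1 | rewrite Cmod_0; simpl; ring].
  - assert (Hm : 0 < Cmod w) by (apply Cmod_gt_0; exact Hw).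
    assert (Hm2 := Cmod2_alt w).
    destruct w as [a b]; cbn [Re Im fst snd] in Hm2.
    set (m := Cmod (a, b)) in *.
    assert (Hab : a ^ 2 + b ^ 2 = m ^ 2) by lra.
    exists (a / m, b / m). split.
    + unfold Cmod at 1; cbn [fst snd]. rewrite <- sqrt_1. f_equal.
      replace ((a / m) ^ 2 + (b / m) ^ 2) with ((a ^ 2 + b ^ 2) / m ^ 2) by (field; lra).
      rewrite Hab. field. lra.
    + cbn. replace (a / m * a - - (b / m) * b) with ((a ^ 2 + b ^ 2) / m) by (field; lra).
      rewrite Hab. field. lra.
Qed.

Lemma Cmod_sub_unit_sq_sum (z1 z2 u : C) : Cmod u = 1 ->
  Cmod (z1 - u)%C ^ 2 + Cmod (u - z2)%C ^ 2
  = 2 + Cmod z1 ^ 2 + Cmod z2 ^ 2 - 2 * Re (Cconj u * (z1 + z2)).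
Proof.
  intros Hu.
  assert (Hu2 : Re u ^ 2 + Im u ^ 2 = 1) by (rewrite <- Cmod2_alt, Hu; ring).
  rewrite !Cmod2_alt.
  destruct z1 as [a b], z2 as [c d], u as [x y]. cbn in *. nra.
Qed.

(* The quantity dominates (1 - |z1|)^2 + (1 - |z2|)^2 by the triangle inequality. *)
Lemma unit_disc_gap_pos (z1 z2 : C) : Cmod z1 < 1 -> Cmod z2 < 1 ->
  0 < 2 + Cmod z1 ^ 2 + Cmod z2 ^ 2 - 2 * Cmod (z1 + z2)%C.
Proof.
  intros H1 H2.
  pose proof (Cmod_triangle z1 z2). pose proof (Cmod_ge_0 z1). pose proof (Cmod_ge_0 z2).
  nra.
Qed.

Lemma b_D2_closed_form (z1 z2 : C) : in_unit_disc z1 -> in_unit_disc z2 ->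
  b_D2 z1 z2 =
  Finite (Cmod (z1 - z2)%C / sqrt (2 + Cmod z1 ^ 2 + Cmod z2 ^ 2 - 2 * Cmod (z1 + z2)%C)).
Proof.
  intros H1 H2. pose proof (unit_disc_gap_pos z1 z2 H1 H2) as Hgap.
  apply Lub_Rbar_max.
  - destruct (Re_conj_mul_attains_Cmod (z1 + z2)) as [u [Hu Hre]].
    exists u. split; [exact Hu|].
    rewrite Cmod_sub_unit_sq_sum, Hre by exact Hu. reflexivity.
  - intros x [u [Hu ->]].
    pose proof (Re_conj_mul_le_Cmod u (z1 + z2) Hu).
    rewrite Cmod_sub_unit_sq_sum by exact Hu.
    apply Rmult_le_compat_l; [apply Cmod_ge_0|].
    apply Rinv_le_contravar; [apply sqrt_lt_R0; exact Hgap|].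
    apply sqrt_le_1_alt. lra.
Qed.

Lemma b_D2_real (r t : R) : -1 < r < 1 -> -1 < t < 1 ->
  b_D2 (RtoC r) (RtoC t) = Finite (Rabs (r - t) / sqrt (2 + r ^ 2 + t ^ 2 - 2 * Rabs (r + t))).
Proof.
  intros Hr Ht.
  rewrite b_D2_closed_form by (unfold in_unit_disc; rewrite Cmod_R; apply Rabs_def1; lra).
  rewrite <- RtoC_minus, <- RtoC_plus, !Cmod_R, !pow2_abs. reflexivity.
Qed.

Lemma b_D2_real_lim_1 (t : R) : -1 < t < 1 ->
  filterlim (fun r : R => b_D2 (RtoC r) (RtoC t))
            (within (fun r : R => 0 < r < 1) (locally 1)) (Rbar_locally 1).
Proof.
  intros Ht.
  set (g r := Rabs (r - t) / sqrt (2 + r ^ 2 + t ^ 2 - 2 * Rabs (r + t))).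
  assert (Hgap : 2 + 1 ^ 2 + t ^ 2 - 2 * Rabs (1 + t) = (1 - t) ^ 2)
    by (rewrite Rabs_pos_eq by lra; ring).
  assert (Hg1 : g 1 = 1).
  { unfold g. rewrite Hgap, sqrt_pow2, Rabs_pos_eq by lra. field. lra. }
  assert (Hg : continuous g 1).
  (* Near 1, neither |r - t| nor |r + t| sits at its kink and the radicand is positive. *)
  { apply (ex_derive_continuous g). unfold g. auto_derive.
    rewrite Rabs_pos_eq by lra. repeat split; try lra.
    - nra.
    - apply Rgt_not_eq, sqrt_lt_R0. nra. }
  apply filterlim_within_ext with (f := fun r => Finite (g r)).
  { intros r Hr. rewrite b_D2_real by lra. reflexivity. }
  intros P HP. apply filter_le_within, (Hg (fun x => P (Finite x))).
  rewrite Hg1. exact HP.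
Qed.

Theorem theorem3p15 :
  (forall z1 z2 : C, in_unit_disc z1 -> in_unit_disc z2 ->
     b_D2 z1 z2 =
     Finite (Cmod (Cminus z1 z2) /
             sqrt (2 + Cmod z1 ^ 2 + Cmod z2 ^ 2 - 2 * Cmod (Cplus z1 z2)))) /\
  (forall t : R, -1 < t < 1 ->
     filterlim (fun r : R => b_D2 (RtoC r) (RtoC t))
               (within (fun r : R => 0 < r < 1) (locally 1))
               (Rbar_locally (Finite 1))).
Proof.
  split.
  - exact b_D2_closed_form.
  - exact b_D2_real_lim_1.
Qed.
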